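(* There is an absolute constant $K$ such that the following holds. Let $(h(i))_{i\ge 0}$ be a Fibonacci-automatic sequence generated by a Fibonacci-DFAO with $m$ states, and let $c \ge 0$ be an integer. Then there is a Fibonacci-DFAO with at most $K m^2 (c+1)^2$ states generating the shifted sequence $(h(i+c))_{i \ge 0}$.
   Context: Fibonacci numbers $F_0=0,F_1=1,F_k=F_{k-1}+F_{k-2}$; for a binary word $x=x_1\cdots x_\ell$, $[x]=\sum_j x_j F_{\ell-j+2}$; a valid Fibonacci representation is a binary word with no factor $11$ (leading zeros allowed). A Fibonacci-DFAO is a deterministic finite automaton with output $(Q,\{0,1\},\delta,q_0,\Delta,\tau)$ (with $\tau: Q\to\Delta$ the output map and $\delta$ possibly partial) reading valid Fibonacci representations most significant digit first; it has a self-loop on $q_0$ under $0$, so its output does not depend on leading zeros. It generates the sequence $(h(i))_{i\ge0}$ if $h(i) = \tau(\delta(q_0,x))$ for every valid representation $x$ with $[x]=i$. A sequence is Fibonacci-automatic if it is generated by some Fibonacci-DFAO. *)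

From mathcomp Require Import all_boot.
Set Implicit Arguments. Unset Strict Implicit. Unset Printing Implicit Defensive.

Fixpoint fib (n : nat) : nat :=
  match n with
  | 0 => 0
  | 1 => 1
  | (k.+1 as m).+1 => fib m + fib k
  end.

(* [x] = sum_{j=1}^{l} x_j F_{l-j+2}; with 0-based index j0 = j-1 the
   weight is F_{l - j0 + 1}.  x is read most significant digit first. *)
Definition fibval (x : seq bool) : nat :=
  \sum_(j < size x) nth false x j * fib (size x - j + 1).

Definition fib_valid (x : seq bool) : bool := ~~ infix [:: true; true] x.

Record fdfao (Delta : Type) := FDFAO {
  fstate : finType;
  fdelta : fstate -> bool -> option fstate;
  fq0 : fstate;
  ftau : fstate -> Delta;
  floop0 : fdelta fq0 false = Some fq0
}.

Definition frun (Delta : Type) (A : fdfao Delta) (x : seq bool) : option (fstate A) :=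
  foldl (fun oq b => obind (fun q => fdelta q b) oq) (Some (fq0 A)) x.

Definition generates (Delta : Type) (A : fdfao Delta) (h : nat -> Delta) : Prop :=
  forall x : seq bool, fib_valid x ->
    exists q, frun A x = Some q /\ ftau q = h (fibval x).

Definition nstates (Delta : Type) (A : fdfao Delta) : nat := #|fstate A|.

(* Pad the input x with L leading zeros and cut it as p ++ s, where the window
   s holds the last L digits.  Then [x] + c = [p] F_(L+1) + [p]' F_L + ([s] + c),
   where [p]' uses the weights lowered by one index.  Since c < F_(L-1), either
   [s] + c has a valid L-digit representation that can follow p, or it
   overflows by exactly one carry, and then [x] + c is the value of P ++ r,
   where P is a valid representation of [p] + 1 and r the greedy representation
   of the remainder.  A representation P of [p] + 1 can be maintained digit by
   digit, so an automaton remembering delta(q0, p), delta(q0, P), the window and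
   the last digit of p outputs h([x] + c).  It has m^2 2^(L+1) states, and
   L about 2 log_2 c keeps this below 32 m^2 (c+1)^2. *)

From mathcomp Require Import all_boot zify.
Set Implicit Arguments. Unset Strict Implicit.

Lemma fibSS n : fib n.+2 = fib n.+1 + fib n. Proof. by []. Qed.

Lemma leq_fibS n : fib n <= fib n.+1.
Proof. by case: n => [|n] //; rewrite fibSS leq_addr. Qed.

(* [fibval] with every weight lowered by one index; the pair
   (fibval x, fibval_lo x) is updated linearly when a digit is appended. *)
Definition fibval_lo (x : seq bool) : nat :=
  \sum_(j < size x) nth false x j * fib (size x - j).

Lemma fibval_nil : fibval [::] = 0. Proof. by rewrite /fibval big_ord0. Qed.

Lemma fibval_lo_nil : fibval_lo [::] = 0. Proof. by rewrite /fibval_lo big_ord0. Qed.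

Lemma fibval_rcons x b : fibval (rcons x b) = fibval x + fibval_lo x + b.
Proof.
rewrite /fibval /fibval_lo size_rcons big_ord_recr /= nth_rcons ltnn eqxx.
rewrite subSnn muln1 -big_split /=; congr (_ + _); apply: eq_bigr => i _.
by rewrite nth_rcons ltn_ord subSn ?(ltnW (ltn_ord i)) // addn1 fibSS mulnDr addn1.
Qed.

Lemma fibval_lo_rcons x b : fibval_lo (rcons x b) = fibval x + b.
Proof.
rewrite /fibval /fibval_lo size_rcons big_ord_recr /= nth_rcons ltnn eqxx.
rewrite subSnn muln1; congr (_ + _); apply: eq_bigr => i _.
by rewrite nth_rcons ltn_ord subSn ?(ltnW (ltn_ord i)) // addn1.
Qed.

Lemma fibval_cat u w : fibval (u ++ w) =
  fibval u * fib (size w).+1 + fibval_lo u * fib (size w) + fibval w.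
Proof.
elim: w u => [|b w IH] u; first by rewrite cats0 fibval_nil muln1 muln0 !addn0.
rewrite -cat_rcons IH (IH [:: b]) -[[:: b]]/(rcons [::] b) !fibval_rcons.
rewrite !fibval_lo_rcons fibval_nil fibval_lo_nil /=; lia.
Qed.

Lemma fibval_cons b w : fibval (b :: w) = b * fib (size w).+2 + fibval w.
Proof.
rewrite -cat1s fibval_cat -[[:: b]]/(rcons [::] b) fibval_rcons.
rewrite fibval_lo_rcons fibval_nil fibval_lo_nil fibSS; lia.
Qed.

Lemma fibval_nseq0_cat k y : fibval (nseq k false ++ y) = fibval y.
Proof.
rewrite fibval_cat.
suff [-> ->] : fibval (nseq k false) = 0 /\ fibval_lo (nseq k false) = 0 by [].
elim: k => [|k [IHv IHlo]]; first by rewrite fibval_nil fibval_lo_nil.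
have -> : nseq k.+1 false = rcons (nseq k false) false.
  by rewrite -cats1 -[[:: false]]/(nseq 1 false) -nseqD addn1.
by rewrite fibval_rcons fibval_lo_rcons IHv IHlo.
Qed.

Fixpoint no11 (x : seq bool) : bool :=
  if x is a :: t then ~~ (a && head false t) && no11 t else true.

Lemma fib_validE x : fib_valid x = no11 x.
Proof.
rewrite /fib_valid; elim: x => [|a t IH] //=.
by rewrite -IH; case: a; case: t {IH} => [|[] [|? ?]].
Qed.

Lemma no11_cat u w : no11 (u ++ w) =
  [&& no11 u, no11 w & ~~ (last false u && head false w)].
Proof.
elim: u => [|a u IH] /=; first by rewrite andbT.
rewrite IH; case: u {IH} => [|a' u] /=;
  by case: a; case: (head false w); case: (no11 w); try case: a';
     try case: (no11 u); try case: (last a' u).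
Qed.

Lemma no11_nseq0_cat k y : no11 (nseq k false ++ y) = no11 y.
Proof. by elim: k. Qed.

Lemma fibval_no11_lt w : no11 w ->
  fibval w < fib (size w).+2 /\ (head false w = false -> fibval w < fib (size w).+1).
Proof.
elim: w => [|b w IH]; first by rewrite fibval_nil.
move=> /andP [no_bb Hw]; have [lt_w lt_w0] := IH Hw.
rewrite (_ : size (b :: w) = (size w).+1) // fibval_cons [head _ _]/=.
rewrite (fibSS (size w).+1) fibSS in lt_w *.
case: b no_bb => [/negbTE/lt_w0 lt_w'|_]; last by split=> [|_]; lia.
by split=> //; lia.
Qed.

Fixpoint zeckendorf (L n : nat) : seq bool :=
  if L is L'.+1 then
    if fib L'.+2 <= n then true :: zeckendorf L' (n - fib L'.+2)
    else false :: zeckendorf L' n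
  else [::].

Lemma zeckendorfP L n : n < fib L.+2 ->
  [/\ size (zeckendorf L n) = L, no11 (zeckendorf L n),
      fibval (zeckendorf L n) = n &
      n < fib L.+1 -> head false (zeckendorf L n) = false].
Proof.
elim: L n => [|L IH] n lt_n.
  by move: lt_n => /= lt_n; split=> //; rewrite fibval_nil; lia.
rewrite [zeckendorf _ _]/=; case: leqP => [le_n|lt_n'].
  have lt_r : n - fib L.+2 < fib L.+1 by move: lt_n; rewrite fibSS; lia.
  have [sz v val h0] := IH _ (leq_trans lt_r (leq_fibS _)).
  split; [by rewrite /= sz | by rewrite /= h0 | | by move=> lt; move: le_n; rewrite leqNgt lt].
  by rewrite fibval_cons sz val; lia.
have [sz v val _] := IH _ lt_n'.
by split; rewrite ?fibval_cons /= ?sz ?val.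
Qed.

Lemma carry_bounds l n (lb : bool) : n < fib l.+3 + fib l ->
  ~~ ((n < fib l.+3) && (~~ lb || (n < fib l.+2))) ->
  fib l.+2 + ~~ lb * fib l.+1 <= n /\ n - (fib l.+2 + ~~ lb * fib l.+1) < fib l.+2.
Proof. by rewrite !fibSS; case: lb; lia. Qed.

Definition succ_rcons (p P : seq bool) (b : bool) : seq bool :=
  if ~~ b && ~~ last false p then rcons p true else rcons P false.

Lemma succ_rcons_no11 p P b : no11 p -> no11 P -> no11 (succ_rcons p P b).
Proof.
move=> p_ok P_ok; rewrite /succ_rcons.
by case: ifP => [/andP [_ /negbTE lb0]|_]; rewrite -cats1 no11_cat ?lb0 ?p_ok ?P_ok ?andbF.
Qed.

Lemma fibval_succ_rcons p P b : ~~ (last false p && b) ->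
  fibval P = (fibval p).+1 -> fibval_lo P = fibval_lo p + ~~ last false p ->
  fibval (succ_rcons p P b) = (fibval (rcons p b)).+1 /\
  fibval_lo (succ_rcons p P b) = fibval_lo (rcons p b) + ~~ b.
Proof.
rewrite /succ_rcons !fibval_rcons !fibval_lo_rcons.
by case: b (last false p) => [] [] //= _; rewrite ?fibval_rcons ?fibval_lo_rcons; lia.
Qed.

Section Runs.

Variables (Delta : Type) (A : fdfao Delta).

Definition run_from (q : fstate A) (w : seq bool) : option (fstate A) :=
  foldl (fun oq b => obind (fun q => fdelta q b) oq) (Some q) w.

Lemma frun_rcons u b : frun A (rcons u b) = obind (fun q => fdelta q b) (frun A u).
Proof. by rewrite /frun foldl_rcons. Qed.

Lemma frun_cat u w q : frun A u = Some q -> frun A (u ++ w) = run_from q w.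
Proof. by rewrite /frun foldl_cat => ->. Qed.

(* The default [ftau q] is a junk value, never reached on valid inputs. *)
Definition output_from (q : fstate A) (w : seq bool) : Delta :=
  odflt (ftau q) (omap (@ftau _ A) (run_from q w)).

Variable h : nat -> Delta.
Hypothesis A_gen : generates A h.

Lemma generates_run w : no11 w -> exists q, frun A w = Some q /\ ftau q = h (fibval w).
Proof. by move=> w_ok; apply: A_gen; rewrite fib_validE. Qed.

Lemma output_from_cat u w q : frun A u = Some q -> no11 (u ++ w) ->
  output_from q w = h (fibval (u ++ w)).
Proof.
move=> u_run uw_ok; have [q' [uw_run <-]] := generates_run uw_ok.
by rewrite /output_from -(frun_cat w u_run) uw_run.
Qed.

End Runs.

Section ShiftAutomaton.

Variables (Delta : Type) (A : fdfao Delta) (q1 : fstate A).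
Hypothesis q0_1 : fdelta (fq0 A) true = Some q1.
Variables (c l : nat).
Local Notation L := l.+1.

Definition shift_state : finType :=
  (fstate A * fstate A * L.-tuple bool * bool)%type.

Lemma card_shift_state : #|shift_state| = #|fstate A| ^ 2 * 2 ^ L.+1.
Proof. by rewrite !card_prod card_tuple card_bool -mulnA -expnSr mulnn. Qed.

Definition shift_delta (st : shift_state) (b : bool) : option shift_state :=
  let: (qp, qP, s, lb) := st in
  let s1 := thead s in
  match fdelta qp s1,
        (if ~~ s1 && ~~ lb then fdelta qp true else fdelta qP false) with
  | Some qp', Some qP' => Some (qp', qP', [tuple of rcons (behead s) b], s1)
  | _, _ => None
  end.

Definition shift_init : shift_state := (fq0 A, q1, [tuple of nseq L false], false).

Lemma shift_delta_init : shift_delta shift_init false = Some shift_init.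
Proof.
rewrite /shift_delta /shift_init /= (floop0 A) q0_1; congr (Some (_, _, _, _)).
by apply: val_inj; rewrite /= -cats1 -[[:: false]]/(nseq 1 false) -nseqD addn1.
Qed.

Definition shift_tau (st : shift_state) : Delta :=
  let: (qp, qP, s, lb) := st in
  let n := fibval s + c in
  if (n < fib L.+2) && (~~ lb || (n < fib L.+1)) then
    output_from qp (zeckendorf L n)
  else output_from qP (zeckendorf L (n - (fib L.+1 + ~~ lb * fib L))).

Definition shift_dfao : fdfao Delta :=
  @FDFAO Delta shift_state shift_delta shift_init shift_tau shift_delta_init.

Variant shift_inv (x : seq bool) : shift_state -> Prop :=
  ShiftInv p P qp qP (s : L.-tuple bool) of
      p ++ s = nseq L false ++ x & no11 P &
      frun A p = Some qp & frun A P = Some qP &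
      fibval P = (fibval p).+1 &
      fibval_lo P = fibval_lo p + ~~ last false p :
    shift_inv x (qp, qP, s, last false p).

Variable h : nat -> Delta.
Hypothesis A_gen : generates A h.

Lemma shift_inv_nil : shift_inv [::] shift_init.
Proof.
apply: (ShiftInv (p := [::]) (P := rcons [::] true)) => //.
- by rewrite cats0.
- by rewrite fibval_rcons fibval_nil fibval_lo_nil.
- by rewrite fibval_lo_rcons fibval_nil fibval_lo_nil.
Qed.

Lemma shift_inv_rcons x b st : no11 (rcons x b) -> shift_inv x st ->
  exists2 st', shift_delta st b = Some st' & shift_inv (rcons x b) st'.
Proof.
move=> xb_ok [p P qp qP [[|s1 s] sz] //= pad P_ok p_run P_run P_val P_lo].
have pad' : rcons p s1 ++ rcons s b = nseq L false ++ rcons x b.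
  by rewrite cat_rcons -rcons_cons -!rcons_cat pad.
have ps1_ok : no11 (rcons p s1).
  by move: xb_ok; rewrite -(no11_nseq0_cat L) -pad' no11_cat => /and3P [].
have [p_ok no_bb] : no11 p /\ ~~ (last false p && s1).
  by move: ps1_ok; rewrite -cats1 no11_cat => /and3P [-> _ ->].
pose P' := succ_rcons p P s1.
have P'_ok : no11 P' by apply: succ_rcons_no11.
have [a [a_run _]] := generates_run A_gen ps1_ok.
have [a' [a'_run _]] := generates_run A_gen P'_ok.
exists (a, a', [tuple of rcons (behead (Tuple sz)) b], last false (rcons p s1)).
  move: a_run a'_run; rewrite /P' /succ_rcons last_rcons frun_rcons p_run /= => ->.
  by case: ifP => _; rewrite frun_rcons ?p_run ?P_run /= => ->.
have [P'_val P'_lo] := fibval_succ_rcons no_bb P_val P_lo.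
by apply: (ShiftInv (P := P')); rewrite ?last_rcons.
Qed.

Lemma frun_shift_dfao x : no11 x ->
  exists2 st, frun shift_dfao x = Some st & shift_inv x st.
Proof.
elim/last_ind: x => [|x b IH] xb_ok; first by exists shift_init; last exact: shift_inv_nil.
have [|st x_run x_inv] := IH.
  by move: xb_ok; rewrite -cats1 no11_cat => /and3P [].
have [st' st_step xb_inv] := shift_inv_rcons xb_ok x_inv.
by exists st'; rewrite // frun_rcons x_run.
Qed.

Hypothesis c_lt : c < fib l.

Lemma shift_tau_inv x st : no11 x -> shift_inv x st -> shift_tau st = h (fibval x + c).
Proof.
move=> x_ok [p P qp qP s pad P_ok p_run P_run P_val P_lo].
have x_val : fibval x = fibval (p ++ s) by rewrite -(fibval_nseq0_cat L) pad.
have : no11 (p ++ s) by rewrite pad no11_nseq0_cat.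
rewrite x_val fibval_cat size_tuple no11_cat => /and3P [p_ok s_ok _].
have [s_lt _] := fibval_no11_lt s_ok; rewrite size_tuple in s_lt.
rewrite /shift_tau; lazy beta iota; set n := fibval s + c.
case: ifP => [/andP [n_lt lb_ok] | /negbT carry].
  have [sz z_ok z_val z_head] := zeckendorfP n_lt.
  rewrite (output_from_cat A_gen p_run); last first.
    by rewrite no11_cat p_ok z_ok; case: (last false p) lb_ok => //= /z_head ->.
  by rewrite fibval_cat sz z_val addnA.
have n_lt : n < fib L.+2 + fib l by rewrite /n; lia.
have [le_r lt_r] := carry_bounds n_lt carry.
have [sz z_ok z_val z_head] := zeckendorfP (leq_trans lt_r (leq_fibS _)).
rewrite (output_from_cat A_gen P_run); last first.
  by rewrite no11_cat P_ok z_ok z_head // andbF.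
rewrite fibval_cat sz z_val P_val P_lo; congr h.
by move: le_r; rewrite mulSn mulnDl; lia.
Qed.

Lemma shift_dfao_generates : generates shift_dfao (fun i => h (i + c)).
Proof.
move=> x; rewrite fib_validE => x_ok.
have [st x_run x_inv] := frun_shift_dfao x_ok.
by exists st; split; last exact: shift_tau_inv.
Qed.

End ShiftAutomaton.

Lemma pow2_le_fib j : 2 ^ j <= fib j.*2.+1.
Proof.
elim: j => [|j IH] //; rewrite doubleS expnS !fibSS.
have := leq_fibS j.*2; lia.
Qed.

Lemma exists_pow2_between c : exists j, c < 2 ^ j /\ 2 ^ j <= c.+1.*2.
Proof.
elim: c => [|c [j [c_lt le_c]]]; first by exists 0.
have [lt_c|le_j] := ltnP c.+1 (2 ^ j); first by exists j; split; lia.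
by exists j.+1; rewrite expnS; split; lia.
Qed.

Theorem theorem13 :
  exists K : nat,
    forall (Delta : Type) (h : nat -> Delta) (A : fdfao Delta) (c : nat),
      generates A h ->
      exists B : fdfao Delta,
        nstates B <= K * (nstates A) ^ 2 * c.+1 ^ 2 /\
        generates B (fun i => h (i + c)).
Proof.
exists 32 => Delta h A c A_gen.
have [q1 q0_1] : exists q1, fdelta (fq0 A) true = Some q1.
  by have [q [q_run _]] := generates_run A_gen (w := [:: true]) erefl; exists q.
have [j [c_lt le_c]] := exists_pow2_between c.
exists (shift_dfao q0_1 c j.*2.+1); split; last first.
  exact/(shift_dfao_generates _ A_gen)/(leq_trans c_lt (pow2_le_fib j)).
rewrite /nstates card_shift_state [32 * _]mulnC -mulnA leq_mul2l; apply/orP; right.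
have -> : 2 ^ j.*2.+3 = 8 * (2 ^ j) ^ 2 by rewrite -addn3 expnD -muln2 expnM mulnC.
by rewrite -[32]/(8 * 4) -mulnA leq_mul2l /= -[4]/(2 ^ 2) -expnMn leq_sqr mul2n.
Qed.
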